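(* Fix $B>1$ and $H>0$, and let $$x(s)=\frac1H\sqrt{1+B^2+2B\sin\!\big(Hs+\tfrac{3\pi}{2}\big)},\qquad z(s)=\int_{3\pi/(2H)}^{\,s+3\pi/(2H)}\frac{1+B\sin(Ht)}{\sqrt{1+B^2+2B\sin(Ht)}}\,dt ,$$ $g(s)=x(s)-\frac{x'(s)}{z'(s)}z(s)$, all considered on $I_0=(-r_0,r_0)$, where $r_0$ is the smallest positive value with $z'(r_0)=0$. Then there exists $\bar r\in(0,r_0)$ with $g(\bar r)=g(-\bar r)=0$, and for all $r\in[-\bar r,\bar r]$ we have $g(r)\ge0$, $x''(r)>0$ and $x'(r)z(r)\le0$. In particular, with $R_0^2=x(\bar r)^2+z(\bar r)^2$, the surface $\Sigma$ obtained by rotating $\beta|_{[-\bar r,\bar r]}$, $\beta=(x,0,z)$, about the $z$-axis is a free boundary CMC surface in the ball $\mathbb B^3_{R_0}$ of radius $R_0$ centered at the origin and satisfies at every point $$|\Phi|^2\langle\vec x,N\rangle^2\le\tfrac12\big(2+H_\Sigma\langle\vec x,N\rangle\big)^2,$$ where $N=(-z'\cos\theta,-z'\sin\theta,x')$ at $(x(s)\cos\theta,x(s)\sin\theta,z(s))$ and $H_\Sigma$ is the (constant) mean curvature of $\Sigma$ with respect to $N$.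
   Context: For $B>1$, rotating $\beta$ about the $z$-axis gives a Delaunay nodoid (an immersed surface of revolution of constant mean curvature); $\beta$ is parametrized by arc length. Free boundary in a ball $\mathbb B^3_{R}$: interior in the open ball, boundary on the sphere of radius $R$, meeting it orthogonally. Conventions: shape operator $A$ w.r.t. $N$ defined by $\langle A(Y),Z\rangle=\langle\bar\nabla_YZ,N\rangle$; mean curvature $=\operatorname{tr}A$ (unnormalized); $\Phi=\Pi-\frac{H_\Sigma}2g_\Sigma$, $|\Phi|^2=|A|^2-H_\Sigma^2/2$; $\vec x$ the position vector. *)

From Stdlib Require Import Reals Lra.
Open Scope R_scope.

Record R3 := mkR3 { c1 : R; c2 : R; c3 : R }.
Definition dot (u v : R3) : R := c1 u * c1 v + c2 u * c2 v + c3 u * c3 v.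

Definition has_deriv3 (f : R -> R3) (a : R) (v : R3) : Prop :=
  derivable_pt_lim (fun u => c1 (f u)) a (c1 v) /\
  derivable_pt_lim (fun u => c2 (f u)) a (c2 v) /\
  derivable_pt_lim (fun u => c3 (f u)) a (c3 v).

Record jet := mkJet { jXs : R3; jXt : R3; jXss : R3; jXst : R3; jXtt : R3 }.

Definition is_jet (X : R -> R -> R3) (s t : R) (J : jet) : Prop :=
  exists Ds Dt : R -> R -> R3,
    (forall u v, has_deriv3 (fun a => X a v) u (Ds u v)) /\
    (forall u v, has_deriv3 (fun b => X u b) v (Dt u v)) /\
    jXs J = Ds s t /\ jXt J = Dt s t /\
    has_deriv3 (fun a => Ds a t) s (jXss J) /\
    has_deriv3 (fun b => Ds s b) t (jXst J) /\
    has_deriv3 (fun b => Dt s b) t (jXtt J).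

Definition fE (J : jet) := dot (jXs J) (jXs J).
Definition fF (J : jet) := dot (jXs J) (jXt J).
Definition fG (J : jet) := dot (jXt J) (jXt J).
Definition fdet (J : jet) := fE J * fG J - fF J * fF J.
Definition se (J : jet) (N : R3) := dot (jXss J) N.
Definition sf (J : jet) (N : R3) := dot (jXst J) N.
Definition sg (J : jet) (N : R3) := dot (jXtt J) N.

(* matrix of the shape operator A = I^{-1} II in the coordinate basis *)
Definition A11 J N := (fG J * se J N - fF J * sf J N) / fdet J.
Definition A12 J N := (fG J * sf J N - fF J * sg J N) / fdet J.
Definition A21 J N := (fE J * sf J N - fF J * se J N) / fdet J.
Definition A22 J N := (fE J * sg J N - fF J * sf J N) / fdet J.

(* unnormalized mean curvature H = tr A *)
Definition mean_curv (J : jet) (N : R3) : R := A11 J N + A22 J N.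
(* |A|^2 = tr (A^2) (A is self-adjoint) *)
Definition normA2 (J : jet) (N : R3) : R :=
  A11 J N ^ 2 + 2 * A12 J N * A21 J N + A22 J N ^ 2.
Definition normPhi2 (J : jet) (N : R3) : R := normA2 J N - mean_curv J N ^ 2 / 2.

Definition free_boundary_CMC (X N : R -> R -> R3) (a R0 : R) : Prop :=
  (exists Hc : R, forall s t, -a <= s <= a ->
     exists J, is_jet X s t J /\ fdet J > 0 /\
       dot (N s t) (N s t) = 1 /\ dot (N s t) (jXs J) = 0 /\ dot (N s t) (jXt J) = 0 /\
       mean_curv J (N s t) = Hc) /\
  (forall s t, -a < s < a -> dot (X s t) (X s t) < R0 ^ 2) /\
  (forall t, dot (X a t) (X a t) = R0 ^ 2 /\ dot (X (-a) t) (X (-a) t) = R0 ^ 2) /\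
  (* orthogonality along the boundary: N tangent to the sphere *)
  (forall t, dot (X a t) (N a t) = 0 /\ dot (X (-a) t) (N (-a) t) = 0).

Definition xN (B H s : R) : R :=
  / H * sqrt (1 + B ^ 2 + 2 * B * sin (H * s + 3 * PI / 2)).

Definition zint (B H t : R) : R :=
  (1 + B * sin (H * t)) / sqrt (1 + B ^ 2 + 2 * B * sin (H * t)).
Definition zpN (B H s : R) : R := zint B H (s + 3 * PI / (2 * H)).

Definition Xrot (x z : R -> R) (s th : R) : R3 :=
  mkR3 (x s * cos th) (x s * sin th) (z s).
Definition Nrot (dx dz : R -> R) (s th : R) : R3 :=
  mkR3 (- dz s * cos th) (- dz s * sin th) (dx s).

(* Writing c = cos(Hs) and q = sqrt(1 + B^2 - 2Bc), the profile is x = q/H with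
   x' = B sin(Hs)/q and z' = (1 - Bc)/q, a unit-speed curve.  On the window (-r0, r0)
   one has z' < 0, i.e. Bc > 1; hence x'' = BH(Bc-1)(B-c)/q^3 > 0, z is odd and negative
   on (0, r0], and g = x - (x'/z') z is even with g' = (x'z'' - x''z') z / z'^2 < 0 on
   (0, r0).  Since g(0) = x(0) > 0 and g -> -oo as z' -> 0 at r0, g has a first positive
   zero rbar, and g >= 0 on [-rbar, rbar].
   Geometrically <X,N> = -g z', so the surface meets the sphere of radius
   |X(rbar)| orthogonally at s = +-rbar, and |X| increases with |s|, so the interior
   lies inside the ball.  The principal curvatures BH(B-c)/q^2 and H(1-Bc)/q^2 sum to
   H and differ by H(B^2-1)/q^2, and the pinching estimate reduces to the elementary
   inequality [pinching_inequality] with p = <X,N> >= 0 and Hp <= Bc - 1. *)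

From Pilot Require Import Defs.
From Stdlib Require Import Reals Lra Psatz.
From Coquelicot Require Import Coquelicot.
Open Scope R_scope.

Lemma incr_of_pos_deriv (f f' : R -> R) (a b : R) : a < b ->
  (forall c, a <= c <= b -> derivable_pt_lim f c (f' c)) ->
  (forall c, a < c < b -> 0 < f' c) -> f a < f b.
Proof.
  intros hab hd hpos.
  destruct (MVT_cor2 f f' a b hab hd) as [c [e hc]].
  pose proof (hpos c hc). nra.
Qed.

Lemma decr_of_neg_deriv (f f' : R -> R) (a b : R) : a < b ->
  (forall c, a <= c <= b -> derivable_pt_lim f c (f' c)) ->
  (forall c, a < c < b -> f' c < 0) -> f b < f a.
Proof.
  intros hab hd hneg.
  assert (h : - f a < - f b).
  { apply (incr_of_pos_deriv (fun u => - f u) (fun u => - f' u)); auto.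
    - intros c hc. apply derivable_pt_lim_opp, hd, hc.
    - intros c hc. pose proof (hneg c hc). lra. }
  lra.
Qed.

Lemma derivable_pt_lim_reflect (f f' : R -> R) (s : R) :
  derivable_pt_lim f (- s) (f' (- s)) ->
  derivable_pt_lim (fun u => f (- u)) s (- f' (- s)).
Proof.
  intros h. apply is_derive_Reals.
  replace (- f' (- s)) with (scal (-1) (f' (- s)))
    by (unfold scal; simpl; unfold mult; simpl; ring).
  apply (is_derive_comp f (fun u => - u)).
  - apply is_derive_Reals, h.
  - auto_derive; auto.
Qed.

Lemma derivable_pt_lim_sq (f : R -> R) (x l : R) :
  derivable_pt_lim f x l -> derivable_pt_lim (fun u => f u ^ 2) x (2 * f x * l).
Proof.
  intros h. apply is_derive_Reals, (is_derive_ext (fun u => f u * f u)); [intros t; simpl; ring|].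
  apply is_derive_Reals. replace (2 * f x * l) with (l * f x + f x * l) by ring.
  apply (derivable_pt_lim_mult f f); exact h.
Qed.

Lemma odd_of_even_deriv (f f' : R -> R) :
  f 0 = 0 -> (forall s, derivable_pt_lim f s (f' s)) ->
  (forall s, f' (- s) = f' s) -> forall s, f (- s) = - f s.
Proof.
  intros h0 hd hev s.
  set (h := fun u => f u + f (- u)).
  assert (hd' : forall c, derivable_pt_lim h c 0).
  { intros c. replace 0 with (f' c + - f' (- c)) by (rewrite hev; ring).
    apply derivable_pt_lim_plus; [apply hd | apply derivable_pt_lim_reflect, hd]. }
  assert (hh : h s = h 0).
  { destruct (Rtotal_order s 0) as [hs | [-> | hs]].
    - destruct (MVT_cor2 h (fun _ => 0) s 0 hs (fun c _ => hd' c)) as [c [e _]]. lra.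
    - reflexivity.
    - destruct (MVT_cor2 h (fun _ => 0) 0 s hs (fun c _ => hd' c)) as [c [e _]]. lra. }
  unfold h in hh. rewrite Ropp_0, h0 in hh. lra.
Qed.

Lemma small_left_of_zero (f : R -> R) (a b eps : R) :
  continuity_pt f a -> f a = 0 -> b < a -> 0 < eps ->
  exists s, b <= s < a /\ Rabs (f s) < eps.
Proof.
  intros hc ha hb heps.
  destruct (hc eps heps) as [del [hdel hP]].
  set (s := Rmax b (a - del / 2)).
  assert (hs : b <= s < a) by (split; [apply Rmax_l | apply Rmax_lub_lt; lra]).
  assert (hs' : a - del / 2 <= s) by apply Rmax_r.
  exists s. split; [exact hs|].
  rewrite <- (Rminus_0_r (f s)), <- ha. apply (hP s). split.
  - split; [exact I | lra].
  - simpl. unfold R_dist. rewrite Rabs_minus_sym, Rabs_right; lra.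
Qed.

Lemma derivable_pt_lim_scale (f : R -> R) (x l k : R) :
  derivable_pt_lim f x l -> derivable_pt_lim (fun u => f u * k) x (l * k).
Proof.
  intros h. replace (l * k) with (l * k + f x * 0) by ring.
  apply (derivable_pt_lim_mult f (fun _ => k)); [exact h | apply derivable_pt_lim_const].
Qed.

Lemma derivable_pt_lim_kcos (k v : R) :
  derivable_pt_lim (fun b => k * cos b) v (- k * sin v).
Proof. apply is_derive_Reals. auto_derive; auto. ring. Qed.

Lemma derivable_pt_lim_ksin (k v : R) :
  derivable_pt_lim (fun b => k * sin b) v (k * cos v).
Proof. apply is_derive_Reals. auto_derive; auto. ring. Qed.

(* Second-order jet of the surface of revolution of (x,0,z) at (s,θ), written in terms of
   the values x, x', z', x'', z'' at s and of c = cos θ, w = sin θ. *)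
Definition rot_jet (x x' z' x'' z'' c w : R) : jet :=
  mkJet (mkR3 (x' * c) (x' * w) z') (mkR3 (- x * w) (x * c) 0) (mkR3 (x'' * c) (x'' * w) z'')
        (mkR3 (- x' * w) (x' * c) 0) (mkR3 (- x * c) (- x * w) 0).

Lemma rot_is_jet (x z x' z' x'' z'' : R -> R) (s th : R) :
  (forall u, derivable_pt_lim x u (x' u)) ->
  (forall u, derivable_pt_lim x' u (x'' u)) ->
  (forall u, derivable_pt_lim z u (z' u)) ->
  derivable_pt_lim z' s (z'' s) ->
  is_jet (Xrot x z) s th (rot_jet (x s) (x' s) (z' s) (x'' s) (z'' s) (cos th) (sin th)).
Proof.
  intros hx hx' hz hz'.
  exists (fun u v => mkR3 (x' u * cos v) (x' u * sin v) (z' u)).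
  exists (fun u v => mkR3 (- x u * sin v) (x u * cos v) 0).
  unfold has_deriv3, Xrot, rot_jet; simpl.
  repeat split; intros;
    first [ apply derivable_pt_lim_scale; auto | apply derivable_pt_lim_kcos
          | apply derivable_pt_lim_ksin | apply derivable_pt_lim_const | auto ].
Qed.

Local Ltac jet_simpl := cbn [Defs.c1 c2 c3 jXs jXt jXss jXst jXtt].

(* Fundamental forms of a surface of revolution with unit-speed profile: the principal
   curvatures are the profile curvature k = x'z'' - x''z' and z'/x, hence
   H = k + z'/x and |Phi|^2 = (k - z'/x)^2 / 2. *)
Lemma rot_jet_geometry (x x' z' x'' z'' c w : R) :
  c ^ 2 + w ^ 2 = 1 -> x' ^ 2 + z' ^ 2 = 1 -> 0 < x ->
  let J := rot_jet x x' z' x'' z'' c w in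
  let N := mkR3 (- z' * c) (- z' * w) x' in
  fdet J > 0 /\ dot N N = 1 /\ dot N (jXs J) = 0 /\ dot N (jXt J) = 0 /\
  mean_curv J N = (x' * z'' - x'' * z') + z' / x /\
  normPhi2 J N = ((x' * z'' - x'' * z') - z' / x) ^ 2 / 2.
Proof.
  intros hcw hunit hx J N.
  assert (circ : forall k, k * c ^ 2 + k * w ^ 2 = k)
    by (intros k; rewrite <- Rmult_plus_distr_l, hcw; ring).
  assert (hE : fE J = 1)
    by (unfold fE, dot, J, rot_jet; jet_simpl; rewrite <- hunit, <- (circ (x' ^ 2)); ring).
  assert (hF : fF J = 0) by (unfold fF, dot, J, rot_jet; jet_simpl; ring).
  assert (hG : fG J = x ^ 2)
    by (unfold fG, dot, J, rot_jet; jet_simpl; rewrite <- (circ (x ^ 2)); ring).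
  assert (hdet : fdet J = x ^ 2) by (unfold fdet; rewrite hE, hF, hG; ring).
  assert (he : se J N = x' * z'' - x'' * z')
    by (unfold se, dot, J, N, rot_jet; jet_simpl; rewrite <- (circ (x'' * z')); ring).
  assert (hf : sf J N = 0) by (unfold sf, dot, J, N, rot_jet; jet_simpl; ring).
  assert (hg : sg J N = x * z')
    by (unfold sg, dot, J, N, rot_jet; jet_simpl; rewrite <- (circ (x * z')); ring).
  assert (hA11 : A11 J N = x' * z'' - x'' * z')
    by (unfold A11; rewrite hdet, hF, hG, he, hf; field; lra).
  assert (hA22 : A22 J N = z' / x) by (unfold A22; rewrite hdet, hF, hE, hg, hf; field; lra).
  assert (hA12 : A12 J N = 0) by (unfold A12; rewrite hdet, hF, hf; field; lra).
  repeat split.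
  - rewrite hdet. nra.
  - unfold dot, N; jet_simpl. rewrite <- hunit, <- (circ (z' ^ 2)). ring.
  - unfold dot, N, J, rot_jet; jet_simpl. rewrite <- (circ (x' * z')). ring.
  - unfold dot, N, J, rot_jet; jet_simpl. ring.
  - unfold mean_curv. rewrite hA11, hA22. ring.
  - unfold normPhi2, normA2, mean_curv. rewrite hA11, hA22, hA12. field. lra.
Qed.

Lemma rot_dot_self (x z : R -> R) (s th : R) :
  dot (Xrot x z s th) (Xrot x z s th) = x s ^ 2 + z s ^ 2.
Proof.
  unfold Xrot, dot; simpl. pose proof (sin2_cos2 th) as e. unfold Rsqr in e.
  replace (x s * cos th * (x s * cos th) + x s * sin th * (x s * sin th))
    with (x s ^ 2 * (sin th * sin th + cos th * cos th)) by ring.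
  rewrite e. ring.
Qed.

Lemma rot_dot_normal (x z dx dz : R -> R) (s th : R) :
  dot (Xrot x z s th) (Nrot dx dz s th) = z s * dx s - x s * dz s.
Proof.
  unfold Xrot, Nrot, dot; simpl. pose proof (sin2_cos2 th) as e. unfold Rsqr in e.
  replace (x s * cos th * (- dz s * cos th) + x s * sin th * (- dz s * sin th))
    with (- (x s * dz s) * (sin th * sin th + cos th * cos th)) by ring.
  rewrite e. ring.
Qed.

(* Pointwise pinching estimate: with |Phi|^2 = (H (B^2-1)/D)^2/2, where
   D = 1 + B^2 - 2Bc, and a support value 0 <= p with Hp <= Bc - 1, one has
   |Phi|^2 p^2 <= (2 + Hp)^2 / 2.  Key step: (H(B^2-1)/D) p - Hp = Hp(2Bc-2)/D <= 2. *)
Lemma pinching_inequality (B H c D p : R) : 1 < B -> 0 < H -> c ^ 2 <= 1 ->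
  D = 1 + B ^ 2 - 2 * B * c -> 0 <= p -> H * p <= B * c - 1 ->
  (H * (B ^ 2 - 1) / D) ^ 2 / 2 * p ^ 2 <= / 2 * (2 + H * p) ^ 2.
Proof.
  intros hB hH hc hD hp hHp.
  assert (hc1 : c <= 1) by nra.
  assert (hDpos : 0 < D) by (rewrite hD; nra).
  set (K := H * (B ^ 2 - 1) / D).
  assert (hK0 : 0 <= K) by (apply Rdiv_le_0_compat; nra).
  assert (hgap : K * p - H * p = H * p * (2 * B * c - 2) / D)
    by (unfold K; rewrite hD in *; field; lra).
  assert (hnum : H * p * (2 * B * c - 2) <= 2 * D).
  { assert (H * p * (B * c - 1) <= (B * c - 1) * (B * c - 1)) by (apply Rmult_le_compat_r; nra).
    nra. }
  assert (hgap2 : H * p * (2 * B * c - 2) / D <= 2)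
    by (apply Rmult_le_reg_r with D; [lra | unfold Rdiv; rewrite Rmult_assoc, Rinv_l; lra]).
  assert (hKp : 0 <= K * p <= 2 + H * p) by (split; nra).
  replace (K ^ 2 / 2 * p ^ 2) with (/ 2 * (K * p) ^ 2) by field.
  apply Rmult_le_compat_l; [lra | nra].
Qed.

Lemma sin_shift_3PI2 (a : R) : sin (a + 3 * PI / 2) = - cos a.
Proof.
  replace (3 * PI / 2) with (3 * (PI / 2)) by field.
  rewrite sin_plus, sin_3PI2, cos_3PI2. ring.
Qed.

Section NodoidProfile.
Variables B H : R.
Hypothesis hB : 1 < B.
Hypothesis hH : 0 < H.

Definition radicand (s : R) : R := 1 + B ^ 2 - 2 * B * cos (H * s).
Definition qN (s : R) : R := sqrt (radicand s).
Definition dxN (s : R) : R := B * sin (H * s) / qN s.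
Definition ddxN (s : R) : R :=
  B * H * cos (H * s) / qN s - B ^ 2 * H * sin (H * s) ^ 2 / qN s ^ 3.
Definition zppN (s : R) : R :=
  B * H * sin (H * s) / qN s - (1 - B * cos (H * s)) * B * H * sin (H * s) / qN s ^ 3.

Lemma radicand_bounds (s : R) : (B - 1) ^ 2 <= radicand s <= (B + 1) ^ 2.
Proof. unfold radicand. pose proof (COS_bound (H * s)). split; nra. Qed.

Lemma radicand_pos (s : R) : 0 < radicand s.
Proof. pose proof (radicand_bounds s). nra. Qed.

Lemma qN_pos (s : R) : 0 < qN s.
Proof. apply sqrt_lt_R0, radicand_pos. Qed.

Lemma qN_sq (s : R) : qN s * qN s = radicand s.
Proof. apply sqrt_sqrt. left. apply radicand_pos. Qed.

Lemma xN_eq (s : R) : xN B H s = qN s / H.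
Proof.
  unfold xN, qN, radicand. rewrite sin_shift_3PI2.
  unfold Rdiv. rewrite Rmult_comm. do 2 f_equal. ring.
Qed.

Lemma zpN_eq (s : R) : zpN B H s = (1 - B * cos (H * s)) / qN s.
Proof.
  unfold zpN, zint, qN, radicand.
  replace (H * (s + 3 * PI / (2 * H))) with (H * s + 3 * PI / 2) by (field; lra).
  rewrite sin_shift_3PI2. f_equal; [ring | f_equal; ring].
Qed.

Lemma xN_pos (s : R) : 0 < xN B H s.
Proof. rewrite xN_eq. apply Rdiv_lt_0_compat; [apply qN_pos | exact hH]. Qed.

Lemma xN_le (s : R) : xN B H s <= (B + 1) / H.
Proof.
  rewrite xN_eq. apply Rmult_le_compat_r; [left; apply Rinv_0_lt_compat, hH|].
  unfold qN. rewrite <- (sqrt_pow2 (B + 1)) by lra.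
  apply sqrt_le_1_alt, radicand_bounds.
Qed.

(* auto_derive expands B^2 as B*(B*1); restore the radicand (and q) in its output. *)
Local Ltac fold_qN s :=
  repeat match goal with
  | |- context [1 + ?b * (?b * 1) + - (2 * ?b * ?c)] =>
      replace (1 + b * (b * 1) + - (2 * b * c)) with (1 + b ^ 2 - 2 * b * c) by ring
  end;
  fold (radicand s) (qN s).

Lemma xN_deriv (s : R) : derivable_pt_lim (xN B H) s (dxN s).
Proof.
  apply is_derive_Reals, (is_derive_ext (fun u => qN u / H)); [intros u; symmetry; apply xN_eq|].
  pose proof (qN_pos s). pose proof (radicand_pos s).
  unfold dxN, qN, radicand. auto_derive; fold_qN s.
  - lra.
  - field. lra.
Qed.

Lemma dxN_deriv (s : R) : derivable_pt_lim dxN s (ddxN s).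
Proof.
  apply is_derive_Reals.
  pose proof (qN_pos s). pose proof (radicand_pos s). pose proof (qN_sq s).
  unfold dxN, ddxN, qN, radicand. auto_derive; fold_qN s.
  - lra.
  - field. lra.
Qed.

Lemma zpN_deriv (s : R) : derivable_pt_lim (zpN B H) s (zppN s).
Proof.
  apply is_derive_Reals, (is_derive_ext (fun u => (1 - B * cos (H * u)) / qN u));
    [intros u; symmetry; apply zpN_eq|].
  pose proof (qN_pos s). pose proof (radicand_pos s). pose proof (qN_sq s).
  unfold zppN, qN, radicand. auto_derive; fold_qN s.
  - lra.
  - field. lra.
Qed.

Lemma sin_sq_H (s : R) : sin (H * s) ^ 2 = 1 - cos (H * s) ^ 2.
Proof. pose proof (sin2_cos2 (H * s)) as e. unfold Rsqr in e. nra. Qed.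

Lemma nodoid_unit_speed (s : R) : dxN s ^ 2 + zpN B H s ^ 2 = 1.
Proof.
  rewrite zpN_eq. unfold dxN. pose proof (qN_pos s). pose proof (radicand_pos s).
  replace ((B * sin (H * s) / qN s) ^ 2 + ((1 - B * cos (H * s)) / qN s) ^ 2)
    with ((B ^ 2 * sin (H * s) ^ 2 + (1 - B * cos (H * s)) ^ 2) / (qN s * qN s))
    by (field; lra).
  rewrite sin_sq_H, qN_sq. unfold radicand in *. field. lra.
Qed.

Lemma nodoid_curvature (s : R) :
  dxN s * zppN s - ddxN s * zpN B H s = B * H * (B - cos (H * s)) / radicand s.
Proof.
  rewrite zpN_eq. unfold dxN, zppN, ddxN. pose proof (qN_pos s).
  replace (B * sin (H * s) / qN s *
             (B * H * sin (H * s) / qN s -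
              (1 - B * cos (H * s)) * B * H * sin (H * s) / qN s ^ 3) -
           (B * H * cos (H * s) / qN s - B ^ 2 * H * sin (H * s) ^ 2 / qN s ^ 3) *
             ((1 - B * cos (H * s)) / qN s))
    with (B * H * (B * sin (H * s) ^ 2 - cos (H * s) + B * cos (H * s) ^ 2) / (qN s * qN s))
    by (field; lra).
  rewrite sin_sq_H, qN_sq. f_equal. ring.
Qed.

Lemma nodoid_meridian_ratio (s : R) :
  zpN B H s / xN B H s = H * (1 - B * cos (H * s)) / radicand s.
Proof.
  rewrite zpN_eq, xN_eq, <- qN_sq. pose proof (qN_pos s). field. lra.
Qed.

Lemma nodoid_ddx_factor (s : R) :
  ddxN s = B * H * (B * cos (H * s) - 1) * (B - cos (H * s)) / qN s ^ 3.
Proof.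
  unfold ddxN. pose proof (qN_pos s).
  replace (B * H * cos (H * s) / qN s - B ^ 2 * H * sin (H * s) ^ 2 / qN s ^ 3)
    with ((B * H * cos (H * s) * (qN s * qN s) - B ^ 2 * H * sin (H * s) ^ 2) / qN s ^ 3)
    by (field; lra).
  rewrite sin_sq_H, qN_sq. unfold radicand. f_equal. ring.
Qed.

Lemma qN_even (s : R) : qN (- s) = qN s.
Proof. unfold qN, radicand. rewrite <- Ropp_mult_distr_r, cos_neg. reflexivity. Qed.

Lemma xN_even (s : R) : xN B H (- s) = xN B H s.
Proof. rewrite !xN_eq, qN_even. reflexivity. Qed.

Lemma zpN_even (s : R) : zpN B H (- s) = zpN B H s.
Proof. rewrite !zpN_eq, qN_even, <- Ropp_mult_distr_r, cos_neg. reflexivity. Qed.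

Lemma dxN_odd (s : R) : dxN (- s) = - dxN s.
Proof.
  unfold dxN. rewrite qN_even, <- Ropp_mult_distr_r, sin_neg.
  pose proof (qN_pos s). field. lra.
Qed.

End NodoidProfile.

Section NodoidWindow.
Variables B H : R.
Hypothesis hB : 1 < B.
Hypothesis hH : 0 < H.
Variable z : R -> R.
Hypothesis hz0 : z 0 = 0.
Hypothesis hz : forall s, derivable_pt_lim z s (zpN B H s).
Variables dx ddx : R -> R.
Hypothesis hdx : forall s, derivable_pt_lim (xN B H) s (dx s).
Hypothesis hddx : forall s, derivable_pt_lim dx s (ddx s).
Variable r0 : R.
Hypothesis hr0 : 0 < r0.
Hypothesis hr0z : zpN B H r0 = 0.
Hypothesis hr0min : forall r, 0 < r < r0 -> zpN B H r <> 0.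

Lemma dx_eq (s : R) : dx s = dxN B H s.
Proof. apply (uniqueness_limite (xN B H) s); [apply hdx | apply xN_deriv; lra]. Qed.

Lemma ddx_eq (s : R) : ddx s = ddxN B H s.
Proof.
  apply (uniqueness_limite dx s); [apply hddx|].
  apply is_derive_Reals, (is_derive_ext (dxN B H)); [intros u; symmetry; apply dx_eq|].
  apply is_derive_Reals, dxN_deriv; lra.
Qed.

(* z' < 0 on (-r0, r0): z'(0) = (1-B)/(B-1) < 0 and z' has no zero in (0, r0). *)
Lemma zp_neg_right (s : R) : 0 <= s < r0 -> zpN B H s < 0.
Proof.
  intros hs.
  assert (h0 : zpN B H 0 < 0).
  { rewrite zpN_eq, Rmult_0_r, cos_0 by lra.
    apply Rdiv_neg_pos; [lra | apply qN_pos; lra]. }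
  assert (hcont : continuity (zpN B H))
    by (apply derivable_continuous; intros u; exists (zppN B H u); apply zpN_deriv; lra).
  destruct (Rlt_or_le (zpN B H s) 0) as [h | h]; [exact h | exfalso].
  assert (hs0 : 0 < s) by (destruct (Req_dec s 0) as [-> | ]; lra).
  assert (hw : exists w, 0 < w <= s /\ zpN B H w = 0).
  { destruct h as [h | h]; [| exists s; split; [lra | symmetry; exact h]].
    destruct (IVT (zpN B H) 0 s hcont) as [w [hw hw0]]; [lra | lra | lra |].
    exists w. split; [| exact hw0]. split; [| lra].
    destruct (Req_dec w 0) as [-> | ]; lra. }
  destruct hw as [w [hw hw0]]. exact (hr0min w ltac:(lra) hw0).
Qed.

Lemma zp_neg (s : R) : - r0 < s < r0 -> zpN B H s < 0.
Proof.
  intros hs. destruct (Rle_or_lt 0 s).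
  - apply zp_neg_right; lra.
  - rewrite <- zpN_even by lra. apply zp_neg_right; lra.
Qed.

Lemma Bcos_gt_1 (s : R) : - r0 < s < r0 -> 1 < B * cos (H * s).
Proof.
  intros hs. pose proof (zp_neg s hs) as h. rewrite zpN_eq in h by lra.
  pose proof (qN_pos B H hB s).
  assert (hnum : (1 - B * cos (H * s)) / qN B H s * qN B H s < 0) by nra.
  field_simplify in hnum; lra.
Qed.

Lemma Hr0_le_PI2 : H * r0 <= PI / 2.
Proof.
  destruct (Rle_or_lt (H * r0) (PI / 2)) as [h | h]; [exact h | exfalso].
  pose proof PI_RGT_0.
  assert (hs : - r0 < PI / (2 * H) < r0).
  { split; [apply Rlt_trans with 0; [lra | apply Rdiv_lt_0_compat; lra]|].
    apply (Rmult_lt_reg_l H); [exact hH|].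
    replace (H * (PI / (2 * H))) with (PI / 2) by (field; lra). exact h. }
  pose proof (Bcos_gt_1 _ hs) as hc.
  replace (H * (PI / (2 * H))) with (PI / 2) in hc by (field; lra).
  rewrite cos_PI2 in hc. lra.
Qed.

(* Since 0 < Hs <= pi/2 on (0, r0], x' = B sin(Hs)/q > 0 there. *)
Lemma dx_pos (s : R) : 0 < s <= r0 -> 0 < dx s.
Proof.
  intros hs. rewrite dx_eq. pose proof Hr0_le_PI2. pose proof PI_RGT_0.
  apply Rdiv_lt_0_compat; [| apply qN_pos; lra].
  apply Rmult_lt_0_compat; [lra | apply sin_gt_0; nra].
Qed.

Lemma ddx_pos (s : R) : - r0 < s < r0 -> 0 < ddx s.
Proof.
  intros hs. rewrite ddx_eq, nodoid_ddx_factor by lra.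
  pose proof (Bcos_gt_1 s hs). pose proof (COS_bound (H * s)). pose proof (qN_pos B H hB s).
  apply Rdiv_lt_0_compat; [| apply pow_lt; lra].
  apply Rmult_lt_0_compat; [apply Rmult_lt_0_compat; nra | lra].
Qed.

(* z(0) = 0 and z' is even, so z is odd; z' < 0 makes z negative on (0, r0]. *)
Lemma z_odd (s : R) : z (- s) = - z s.
Proof.
  apply (odd_of_even_deriv z (zpN B H)); [exact hz0 | exact hz | intros; apply zpN_even; lra].
Qed.

Lemma z_neg (s : R) : 0 < s <= r0 -> z s < 0.
Proof.
  intros hs. rewrite <- hz0.
  apply (decr_of_neg_deriv z (zpN B H)); [lra | intros; apply hz|].
  intros c hc. apply zp_neg_right. lra.
Qed.

(* x'z <= 0 on the window: both factors change sign at 0. *)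
Lemma dx_z_nonpos (r : R) : - r0 < r < r0 -> dx r * z r <= 0.
Proof.
  assert (hright : forall r, 0 <= r < r0 -> dx r * z r <= 0).
  { intros u hu. destruct (Req_dec u 0) as [-> | hne]; [rewrite hz0; lra|].
    pose proof (dx_pos u ltac:(lra)). pose proof (z_neg u ltac:(lra)). nra. }
  intros hr. destruct (Rle_or_lt 0 r); [apply hright; lra|].
  pose proof (hright (- r) ltac:(lra)) as h.
  rewrite dx_eq, dxN_odd, <- dx_eq, z_odd in h by lra. lra.
Qed.

(* g = x - (x'/z') z; its zeros are the points where the tangent line of the profile
   passes through the origin, i.e. where the rotated surface meets a centred sphere
   orthogonally. *)
Definition gN (s : R) : R := xN B H s - dx s / zpN B H s * z s.

Lemma gN_even (s : R) : gN (- s) = gN s.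
Proof.
  unfold gN. rewrite xN_even, zpN_even, z_odd, !dx_eq, dxN_odd by lra.
  unfold Rdiv. ring.
Qed.

Lemma gN_pos_0 : 0 < gN 0.
Proof. unfold gN. rewrite hz0, Rmult_0_r, Rminus_0_r. apply xN_pos; lra. Qed.

(* g' = (x'z'' - x''z') z / z'^2 is negative on (0, r0): the profile is convex and z < 0. *)
Lemma gN_deriv (s : R) : zpN B H s <> 0 ->
  derivable_pt_lim gN s ((dx s * zppN B H s - ddx s * zpN B H s) * z s / zpN B H s ^ 2).
Proof.
  intros hs.
  replace ((dx s * zppN B H s - ddx s * zpN B H s) * z s / zpN B H s ^ 2)
    with (dx s - ((ddx s * zpN B H s - zppN B H s * dx s) / (zpN B H s)² * z s
                  + dx s / zpN B H s * zpN B H s))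
    by (unfold Rsqr; field; exact hs).
  apply derivable_pt_lim_minus; [apply hdx|].
  apply (derivable_pt_lim_mult (dx / zpN B H)%F z); [| apply hz].
  apply derivable_pt_lim_div; [apply hddx | apply zpN_deriv; lra | exact hs].
Qed.

Lemma gN_decreasing (a b : R) : 0 <= a < b -> b < r0 -> gN b < gN a.
Proof.
  intros hab hb.
  apply (decr_of_neg_deriv gN
    (fun c => (dx c * zppN B H c - ddx c * zpN B H c) * z c / zpN B H c ^ 2) a b);
    [lra | intros c hc; apply gN_deriv |].
  - apply Rlt_not_eq, zp_neg_right. lra.
  - intros c hc. pose proof (zp_neg_right c ltac:(lra)). pose proof (z_neg c ltac:(lra)).
    rewrite dx_eq, ddx_eq, nodoid_curvature by lra.
    pose proof (radicand_pos B H hB c). pose proof (COS_bound (H * c)).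
    assert (hk : 0 < B * H * (B - cos (H * c)) / radicand B H c)
      by (apply Rdiv_lt_0_compat; [apply Rmult_lt_0_compat; nra | lra]).
    apply Rdiv_neg_pos; [apply Rmult_pos_neg; assumption | nra].
Qed.

(* x' increases and z decreases on the window, so x'z is decreasing there. *)
Lemma dx_z_decreasing (a s : R) : 0 < a <= s -> s < r0 -> dx s * z s <= dx a * z a.
Proof.
  intros has hs. destruct (Req_dec a s) as [<- | hne]; [lra|].
  assert (hdx_le : dx a < dx s).
  { apply (incr_of_pos_deriv dx ddx); [lra | intros; apply hddx|].
    intros c hc. apply ddx_pos. lra. }
  assert (hz_le : z s < z a).
  { apply (decr_of_neg_deriv z (zpN B H)); [lra | intros; apply hz|].
    intros c hc. apply zp_neg_right. lra. }
  pose proof (dx_pos a ltac:(lra)). pose proof (z_neg s ltac:(lra)). nra.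
Qed.

(* Near r0 the term -(x'/z') z blows up to -oo while x stays bounded, so g < 0 there. *)
Lemma gN_neg_near_r0 : exists r1, 0 < r1 < r0 /\ gN r1 < 0.
Proof.
  set (a := r0 / 2). set (k := - (dx a * z a)). set (M := (B + 1) / H).
  assert (hk : 0 < k)
    by (unfold k; pose proof (dx_pos a ltac:(unfold a; lra));
        pose proof (z_neg a ltac:(unfold a; lra)); nra).
  assert (hM : 0 < M) by (apply Rdiv_lt_0_compat; lra).
  assert (hcont : continuity_pt (zpN B H) r0)
    by (apply derivable_continuous_pt; exists (zppN B H r0); apply zpN_deriv; lra).
  destruct (small_left_of_zero (zpN B H) r0 a (k / M) hcont hr0z)
    as [s [hs hsmall]]; [unfold a; lra | apply Rdiv_lt_0_compat; lra |].
  exists s. split; [unfold a in hs; lra|].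
  pose proof (zp_neg_right s ltac:(unfold a in hs; lra)) as hzs.
  pose proof (dx_z_decreasing a s ltac:(unfold a in *; lra) (proj2 hs)) as hdz.
  rewrite Rabs_left in hsmall by exact hzs.
  assert (hMz : - (M * zpN B H s) < k)
    by (replace k with (M * (k / M)) by (field; lra); nra).
  assert (hquot : M < dx s / zpN B H s * z s).
  { apply (Rmult_lt_reg_r (- zpN B H s)); [lra|].
    replace (dx s / zpN B H s * z s * - zpN B H s) with (- (dx s * z s)) by (field; lra).
    assert (hkdef : k = - (dx a * z a)) by reflexivity. nra. }
  pose proof (xN_le B H hB hH s) as hx. fold M in hx. unfold gN. lra.
Qed.

Lemma gN_continuous (s : R) : 0 <= s < r0 -> continuity_pt gN s.
Proof.
  intros hs. apply derivable_continuous_pt. eexists.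
  apply gN_deriv, Rlt_not_eq, zp_neg_right, hs.
Qed.

Lemma rbar_exists :
  exists rbar, 0 < rbar < r0 /\ gN rbar = 0 /\ forall r, - rbar <= r <= rbar -> 0 <= gN r.
Proof.
  destruct gN_neg_near_r0 as [r1 [hr1 hg1]].
  destruct (Ranalysis5.IVT_interv (fun s => - gN s) 0 r1) as [rb [hrb hgrb]].
  - intros c hc. apply continuity_pt_opp, gN_continuous. lra.
  - lra.
  - pose proof gN_pos_0. lra.
  - lra.
  assert (hrb0 : 0 < rb) by (destruct (Req_dec rb 0) as [-> | ]; pose proof gN_pos_0; lra).
  assert (hgrb0 : gN rb = 0) by lra.
  exists rb. split; [lra | split; [exact hgrb0|]].
  assert (hright : forall r, 0 <= r <= rb -> 0 <= gN r).
  { intros r hr. destruct (Req_dec r rb) as [-> | hne]; [lra|].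
    pose proof (gN_decreasing r rb ltac:(lra) ltac:(lra)). lra. }
  intros r hr. destruct (Rle_or_lt 0 r); [apply hright; lra|].
  rewrite <- gN_even. apply hright. lra.
Qed.

Lemma nodoid_jet_geometry (s th : R) :
  let J := rot_jet (xN B H s) (dx s) (zpN B H s) (ddx s) (zppN B H s) (cos th) (sin th) in
  let N := Nrot dx (zpN B H) s th in
  fdet J > 0 /\ dot N N = 1 /\ dot N (jXs J) = 0 /\ dot N (jXt J) = 0 /\
  mean_curv J N = H /\ normPhi2 J N = (H * (B ^ 2 - 1) / radicand B H s) ^ 2 / 2.
Proof.
  assert (hcirc : cos th ^ 2 + sin th ^ 2 = 1)
    by (pose proof (sin2_cos2 th) as e; unfold Rsqr in e; lra).
  assert (hunit : dx s ^ 2 + zpN B H s ^ 2 = 1) by (rewrite dx_eq; apply nodoid_unit_speed; lra).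
  destruct (rot_jet_geometry (xN B H s) (dx s) (zpN B H s) (ddx s) (zppN B H s) (cos th) (sin th)
              hcirc hunit (xN_pos B H hB hH s)) as [hdet [hN [hNs [hNt [hmean hphi]]]]].
  assert (hk : dx s * zppN B H s - ddx s * zpN B H s = B * H * (B - cos (H * s)) / radicand B H s)
    by (rewrite dx_eq, ddx_eq; apply nodoid_curvature; lra).
  rewrite hk, nodoid_meridian_ratio in hmean, hphi by lra.
  pose proof (radicand_pos B H hB s).
  cbv zeta. unfold Nrot. repeat split; auto.
  - rewrite hmean. unfold radicand in *. field. lra.
  - rewrite hphi. unfold radicand in *. field. lra.
Qed.

Lemma support_function (s th : R) : zpN B H s <> 0 ->
  dot (Xrot (xN B H) z s th) (Nrot dx (zpN B H) s th) = - (gN s * zpN B H s).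
Proof. intros hs. rewrite rot_dot_normal. unfold gN. field. exact hs. Qed.

(* |X|^2 = x^2 + z^2 increases on [0, r0): x, x' >= 0 and z, z' < 0. *)
Lemma radius_increasing (a b : R) : 0 <= a < b -> b < r0 ->
  xN B H a ^ 2 + z a ^ 2 < xN B H b ^ 2 + z b ^ 2.
Proof.
  intros hab hb.
  apply (incr_of_pos_deriv (fun u => xN B H u ^ 2 + z u ^ 2)
           (fun u => 2 * xN B H u * dx u + 2 * z u * zpN B H u)); [lra | |].
  - intros c _. apply (derivable_pt_lim_plus (fun u => xN B H u ^ 2) (fun u => z u ^ 2));
      apply derivable_pt_lim_sq; auto.
  - intros c hc. pose proof (xN_pos B H hB hH c). pose proof (dx_pos c ltac:(lra)).
    pose proof (z_neg c ltac:(lra)). pose proof (zp_neg_right c ltac:(lra)). nra.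
Qed.

Lemma nodoid_free_boundary (rbar : R) : 0 < rbar < r0 -> gN rbar = 0 ->
  free_boundary_CMC (Xrot (xN B H) z) (Nrot dx (zpN B H)) rbar
    (sqrt (xN B H rbar ^ 2 + z rbar ^ 2)).
Proof.
  intros hr hg.
  assert (hR0 : sqrt (xN B H rbar ^ 2 + z rbar ^ 2) ^ 2 = xN B H rbar ^ 2 + z rbar ^ 2)
    by (apply pow2_sqrt; nra).
  assert (hzp : zpN B H rbar <> 0) by (apply Rlt_not_eq, zp_neg_right; lra).
  assert (hF_even : forall s, xN B H (- s) ^ 2 + z (- s) ^ 2 = xN B H s ^ 2 + z s ^ 2)
    by (intros s; rewrite xN_even, z_odd by lra; ring).
  split; [| split; [| split]].
  - exists H. intros s t hs.
    exists (rot_jet (xN B H s) (dx s) (zpN B H s) (ddx s) (zppN B H s) (cos t) (sin t)).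
    destruct (nodoid_jet_geometry s t) as [h1 [h2 [h3 [h4 [h5 _]]]]].
    split; [apply rot_is_jet; [exact hdx | exact hddx | exact hz | apply zpN_deriv; lra]|].
    repeat split; assumption.
  - intros s t hs. rewrite rot_dot_self, hR0.
    destruct (Rle_or_lt 0 s).
    + apply radius_increasing; lra.
    + rewrite <- hF_even. apply radius_increasing; lra.
  - intros t. rewrite !rot_dot_self, hR0, hF_even. split; reflexivity.
  - intros t. rewrite !support_function, gN_even, hg by (rewrite ?zpN_even; lra). lra.
Qed.

Lemma nodoid_pinching (rbar : R) : rbar < r0 ->
  (forall r, - rbar <= r <= rbar -> 0 <= gN r) ->
  forall s th, - rbar <= s <= rbar ->
  exists J, is_jet (Xrot (xN B H) z) s th J /\
    normPhi2 J (Nrot dx (zpN B H) s th) *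
      dot (Xrot (xN B H) z s th) (Nrot dx (zpN B H) s th) ^ 2
    <= / 2 * (2 + mean_curv J (Nrot dx (zpN B H) s th) *
                  dot (Xrot (xN B H) z s th) (Nrot dx (zpN B H) s th)) ^ 2.
Proof.
  intros hr hg s th hs.
  exists (rot_jet (xN B H s) (dx s) (zpN B H s) (ddx s) (zppN B H s) (cos th) (sin th)).
  split; [apply rot_is_jet; [exact hdx | exact hddx | exact hz | apply zpN_deriv; lra]|].
  destruct (nodoid_jet_geometry s th) as [_ [_ [_ [_ [hmean hphi]]]]].
  rewrite hmean, hphi.
  assert (hzp : zpN B H s < 0) by (apply zp_neg; lra).
  assert (hsupp_nonneg : 0 <= dot (Xrot (xN B H) z s th) (Nrot dx (zpN B H) s th))
    by (rewrite support_function by lra; pose proof (hg s hs); nra).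
  assert (hsupp_bound : H * dot (Xrot (xN B H) z s th) (Nrot dx (zpN B H) s th)
                        <= B * cos (H * s) - 1).
  { rewrite rot_dot_normal, xN_eq, zpN_eq by lra.
    pose proof (qN_pos B H hB s). pose proof (dx_z_nonpos s ltac:(lra)).
    replace (H * (z s * dx s - qN B H s / H * ((1 - B * cos (H * s)) / qN B H s)))
      with (H * (dx s * z s) - (1 - B * cos (H * s))) by (field; lra).
    nra. }
  apply (pinching_inequality B H (cos (H * s))); try assumption.
  - pose proof (COS_bound (H * s)). nra.
  - reflexivity.
Qed.
End NodoidWindow.

Theorem proposition3p6
  (B H : R) (hB : 1 < B) (hH : 0 < H)
  (z : R -> R) (hz0 : z 0 = 0)
  (hz : forall s, derivable_pt_lim z s (zpN B H s))
  (dx ddx : R -> R)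
  (hdx : forall s, derivable_pt_lim (xN B H) s (dx s))
  (hddx : forall s, derivable_pt_lim dx s (ddx s))
  (r0 : R) (hr0 : 0 < r0) (hr0z : zpN B H r0 = 0)
  (hr0min : forall r, 0 < r < r0 -> zpN B H r <> 0) :
  let g := fun s => xN B H s - dx s / zpN B H s * z s in
  exists rbar : R,
    0 < rbar < r0 /\ g rbar = 0 /\ g (- rbar) = 0 /\
    (forall r, - rbar <= r <= rbar ->
       0 <= g r /\ 0 < ddx r /\ dx r * z r <= 0) /\
    let R0 := sqrt (xN B H rbar ^ 2 + z rbar ^ 2) in
    let X := Xrot (xN B H) z in
    let N := Nrot dx (zpN B H) in
    free_boundary_CMC X N rbar R0 /\
    (forall s th, - rbar <= s <= rbar ->
       exists J, is_jet X s th J /\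
         normPhi2 J (N s th) * (dot (X s th) (N s th)) ^ 2
           <= / 2 * (2 + mean_curv J (N s th) * dot (X s th) (N s th)) ^ 2).
Proof.
  intros g.
  destruct (rbar_exists B H hB hH z hz0 hz dx ddx hdx hddx r0 hr0 hr0z hr0min)
    as [rbar [hr [hg0 hgnn]]].
  exists rbar. split; [exact hr|]. split; [exact hg0|].
  split; [rewrite <- hg0; apply gN_even; assumption|].
  split.
  - intros r hrr. split; [exact (hgnn r hrr)|]. split.
    + apply ddx_pos with (B := B) (H := H) (dx := dx) (r0 := r0); auto; lra.
    + apply dx_z_nonpos with (B := B) (H := H) (r0 := r0); auto; lra.
  - split.
    + apply nodoid_free_boundary with (ddx := ddx) (r0 := r0); assumption.
    + apply nodoid_pinching with (ddx := ddx) (r0 := r0); auto; lra.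
Qed.
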